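(* Let $\widehat\pi$ be the policy computed by ALG-CE under the good event $E$. Then $$\varepsilon(\widehat\pi)=O\left(\sqrt{\max\left\{\lambda,\frac{m_0}{p_+}\right\}\frac{\log(NT)}{T}}\right).$$
   Context: Two-stage causal MDP. Start state $0$, intermediate states $[k]$, terminal state. At each state $i\in\{0,\dots,k\}$: independent Bernoulli variables $X^i_1,\dots,X^i_n$, $q^i_j=\mathbb{P}\{X^i_j=1\}$ unknown; atomic interventions $\mathcal{I}_i=\{do()\}\cup\{do(X^i_j=0),do(X^i_j=1):j\in[n]\}$, $N=2n+1$ ($do(X^i_j=x)$ sets $X^i_j=x$, other variables drawn independently). Performing $a\in\mathcal{I}_0$ at state $0$ leads to $i\in[k]$ with unknown probability $P_{(a,i)}$ (depending stochastically on the realized $X^0$-values); $P\in\mathbb{R}^{N\times k}$, $p_+=\min\{P_{(a,i)}>0\}$. At state $i\in[k]$, after an intervention all $X^i_j$ and a reward $R_i\in\{0,1\}$ (law depending on the $X^i$-values) are observed; $\mathbb{E}[R_i\mid a]$ is the expected reward under $a\in\mathcal{I}_i$. A policy $\pi$ picks $\pi(0)\in\mathcal{I}_0$, $\pi(i)\in\mathcal{I}_i$; value $V(\pi)=\sum_iP_{(\pi(0),i)}\mathbb{E}[R_i\mid\pi(i)]$; $\pi^*$ maximizes $V$; $\varepsilon(\pi)=V(\pi^* )-V(\pi)$. Causal parameters: with $\bar q^i_j=\min(q^i_j,1-q^i_j)$ sorted as $\bar q^i_{(1)}\le\dots\le\bar q^i_{(n)}$, $m_i=\max\{j:\bar q^i_{(j)}<1/j\}$;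 $\mathcal{I}_{m_i}$ is the set of interventions setting a variable with $\bar q^i_{(j)}<1/j$ to its less likely value; $M=\mathrm{diag}(m_1,\dots,m_k)$. Frequency vectors: $f\in\mathbb{R}^N$, $f\ge0$, $\sum f_a=1$; $x^{\circ-1/2}$ is entrywise $x_i^{-1/2}$; $\lambda=\min_f\|PM^{1/2}(P^\top f)^{\circ-1/2}\|_\infty^2$. Algorithm ALG-CE with budget $T$ (estimates are empirical frequencies/means). Phase 1 ($T/3$ rounds): $T/6$ rounds of $do()$ at state $0$, giving estimates of $q^0_j$, $\widehat m_0$, $\mathcal{I}_{m_0}$, and $\widehat P_{(a,i)}$ for $a\notin\mathcal{I}_{m_0}$ (frequency of reaching $i$ among rounds whose $X^0$-values agree with $a$); then each $a\in\mathcal{I}_{m_0}$ is performed $T/(6|\mathcal{I}_{m_0}|)$ times to get $\widehat P_{(a,i)}$. Phase 2: $\tilde f\in\arg\max_f\min_i(\widehat P^\top f)_i$. Phase 3 ($T/3$ rounds): each $a\in\mathcal{I}_0$ performed $\frac12(\tilde f(a)+\frac1N)\frac T3$ times with $do()$ at the reached state, giving $\widehat m_i$, $\widehat M=\mathrm{diag}(\widehat m_1,\dots,\widehat m_k)$. Phase 4: $\widehat f^*\in\arg\min_f\|\widehat P\widehat M^{1/2}(\widehat P^\top f)^{\circ-1/2}\|_\infty$. Phase 5 ($T/3$ rounds): with $h(a)=\frac13(\widehat f^*(a)+\tilde f(a)+\frac1N)$, each $a$ performed $h(a)T/6$ times with $do()$ at the reached state (estimating $\mathcal{I}_{m_i}$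 and $\widehat{\mathcal{R}}_{(b,i)}$ for $b\notin\mathcal{I}_{m_i}$ from rounds whose $X^i$-values agree with $b$), then $h(a)T/6$ times with round-robin over $b\in\mathcal{I}_{m_i}$ at the reached state $i$ (estimating $\widehat{\mathcal{R}}_{(b,i)}$ for $b\in\mathcal{I}_{m_i}$). Output $\widehat\pi(i)\in\arg\max_b\widehat{\mathcal{R}}_{(b,i)}$, $\widehat\pi(0)\in\arg\max_a\sum_i\widehat P_{(a,i)}\widehat{\mathcal{R}}_{(\widehat\pi(i),i)}$. Good event $E=E_1\cap\dots\cap E_5$: ($E_1$) for every $a\in\mathcal{I}_0$, the transition estimates formed in each of Phases 1, 3, 5 satisfy $\sum_i|\widehat P_{(a,i)}-P_{(a,i)}|\le p_+/3$; ($E_2$) $\widehat m_0\in[\frac23m_0,2m_0]$; ($E_3$) $\widehat m_i\in[\frac23m_i,2m_i]$ for all $i\in[k]$ (for the estimates in Phases 3 and 5); ($E_4$) for all $a\in\mathcal{I}_0$, the Phase 1 estimates satisfy $\sum_i|\widehat P_{(a,i)}-P_{(a,i)}|\le\eta'$ with $\eta'=\sqrt{\frac{150m_0}{Tp_+}\log\frac{3T}{k}}$; ($E_5$) $|\mathbb{E}[R_i\mid a]-\widehat{\mathcal{R}}_{(a,i)}|\le\widehat\eta_i$ for all $i\in[k]$, $a\in\mathcal{I}_i$, with $\widehat\eta_i=\sqrt{\frac{27\widehat m_i}{T(\widehat P^\top\widehat f^* )_i}\log(2TN)}$. Here $\widehat P$ and $\widehat M$ denote the Phase 1 and Phase 3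 estimates. *)

From HB Require Import structures.
From mathcomp Require Import all_boot all_order all_algebra.
From mathcomp Require Import boolp classical_sets reals exp.

Set Implicit Arguments.
Unset Strict Implicit.
Unset Printing Implicit Defensive.

Import Order.TTheory GRing.Theory Num.Theory.
Local Open Scope ring_scope.
Local Open Scope classical_set_scope.

Section CausalMDP.
Variable R : realType.

(* Atomic interventions on n binary variables:
   None = do(),  Some (j, v) = do(X_j = v).  There are 2n+1 of them. *)
Definition interv (n : nat) : finType := option ('I_n * bool).

Definition Nint (n : nat) : nat := (2 * n + 1)%N.

Definition assignment (n : nat) : finType := {ffun 'I_n -> bool}.

(* Probability of realisation x of (X_1..X_n) under intervention a, when the
   X_j are independent Bernoulli(q j) (the intervened variable is set). *)
Definition prob_under (n : nat) (q : 'I_n -> R) (a : interv n)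
    (x : assignment n) : R :=
  \prod_(j < n)
    match a with
    | Some (l, v) =>
        if l == j then (if x j == v then 1 else 0)
        else (if x j then q j else 1 - q j)
    | None => if x j then q j else 1 - q j
    end.

Definition trans (n k : nat) (q0 : 'I_n -> R)
    (K : assignment n -> 'I_k -> R) (a : interv n) (i : 'I_k) : R :=
  \sum_(x : assignment n) prob_under q0 a x * K x i.

(* E[R_i | a], where r x = P{R_i = 1 | X^i = x}. *)
Definition exp_reward (n : nat) (q : 'I_n -> R) (r : assignment n -> R)
    (a : interv n) : R :=
  \sum_(x : assignment n) prob_under q a x * r x.

(* Policy: (pi(0), (pi(i))_{i in [k]}) ; value V(pi). *)
Definition value (n k : nat) (P : interv n -> 'I_k -> R)
    (ER : 'I_k -> interv n -> R) (pi0 : interv n) (pi : 'I_k -> interv n) : R :=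
  \sum_(i < k) P pi0 i * ER i (pi i).

(* The causal parameter m: qbar_j = min(q_j, 1 - q_j), sorted increasingly,
   m = max { j : qbar_(j) < 1/j } (0 if no such j, only possible for n = 0). *)
Definition qbar_sorted (n : nat) (q : 'I_n -> R) : seq R :=
  sort <=%R [seq Num.min (q j) (1 - q j) | j <- enum 'I_n].

Definition mpar (n : nat) (q : 'I_n -> R) : nat :=
  \max_(j < n.+1 | (0 < j)%N && (nth 1 (qbar_sorted q) j.-1 < (j%:R)^-1)) j.

(* p_+ = min { P_(a,i) : P_(a,i) > 0 } (all entries are <= 1) *)
Definition pplus (n k : nat) (P : interv n -> 'I_k -> R) : R :=
  \big[Num.min/1]_(ai : interv n * 'I_k | 0 < P ai.1 ai.2) P ai.1 ai.2.

Definition freq (n : nat) (f : interv n -> R) : Prop :=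
  (forall a, 0 <= f a) /\ \sum_a f a = 1.

Definition Ptf (n k : nat) (P : interv n -> 'I_k -> R) (f : interv n -> R)
    (i : 'I_k) : R :=
  \sum_a P a i * f a.

(* f gives a finite value to || P M^{1/2} (P^T f)^{o -1/2} ||_oo, i.e. no
   entry 0^{-1/2} = +oo is multiplied by a positive P_(a,i). *)
Definition admissible (n k : nat) (P : interv n -> 'I_k -> R)
    (f : interv n -> R) : Prop :=
  forall a i, 0 < P a i -> 0 < Ptf P f i.

(* || P M^{1/2} (P^T f)^{o -1/2} ||_oo  (meaningful for admissible f) *)
Definition Phi (n k : nat) (P : interv n -> 'I_k -> R) (m : 'I_k -> nat)
    (f : interv n -> R) : R :=
  \big[Num.max/0]_a
    `| \sum_(i < k) P a i * Num.sqrt (m i)%:R * (Num.sqrt (Ptf P f i))^-1 |.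

(* lambda = min_f || P M^{1/2} (P^T f)^{o -1/2} ||_oo^2
   (non-admissible f have value +oo and are discarded) *)
Definition lambda (n k : nat) (P : interv n -> 'I_k -> R) (m : 'I_k -> nat) : R :=
  inf [set y | exists f, freq f /\ admissible P f /\ y = Phi P m f ^+ 2].

Definition minPtf (n k : nat) (P : interv n -> 'I_k -> R) (f : interv n -> R) : R :=
  \big[Num.min/1]_(i < k) Ptf P f i.

Definition l1dist (n k : nat) (Ph P : interv n -> 'I_k -> R) (a : interv n) : R :=
  \sum_(i < k) `| Ph a i - P a i |.

End CausalMDP.

(* Because the output policy maximises the plug-in value V^ built from the Phase 1
   transitions P^ and the reward estimates R^, the regret is at most
   |V(pi_star) - V^(pi_star)| + |V(pi^) - V^(pi^)|, and each of these is at most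
   sum_i |P^_(a,i) - P_(a,i)| + sum_i P_(a,i) eta^_i.  The first sum is bounded by E4.
   For the second, E1 forces P^ to lie entrywise between 2/3 P and 4/3 P (an entry
   error of at most p+/3 is small compared with any positive entry) and E3 gives
   m^_i <= 2 m_i, so ||P^ M^^(1/2) (P^^T f)^(o -1/2)||_oo is at most three times
   ||P M^(1/2) (P^T f)^(o -1/2)||_oo for every f; optimality of f^* then bounds the
   former, at f^*, by 3 sqrt(lambda). *)

From HB Require Import structures.
From mathcomp Require Import all_boot all_order all_algebra.
From mathcomp Require Import boolp classical_sets reals exp.
From mathcomp Require Import ring lra zify.

Set Implicit Arguments.
Unset Strict Implicit.
Unset Printing Implicit Defensive.
Import Order.TTheory GRing.Theory Num.Theory.
Local Open Scope ring_scope.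

Section SqrtBounds.
Variable R : rcfType.

Lemma sqrt_le_mul (c x y : R) : 0 <= c -> x <= c ^+ 2 * y ->
  Num.sqrt x <= c * Num.sqrt y.
Proof.
move=> c_ge0 le_xy; rewrite -(ger0_norm c_ge0) -sqrtr_sqr -sqrtrM ?exprn_ge0 //.
exact: ler_wsqrtr.
Qed.

Lemma sqrt_ratio_le (p p1 u u1 t t1 : R) :
  0 <= p1 <= 4 / 3 * p -> 0 <= u1 <= 2 * u -> 0 < t -> 2 / 3 * t <= t1 ->
  p1 * Num.sqrt u1 / Num.sqrt t1 <= 3 * (p * Num.sqrt u / Num.sqrt t).
Proof.
move=> /andP[p1_ge0 p1_le] /andP[u1_ge0 u1_le] t_gt0 t1_ge.
have t1_gt0 : 0 < t1 by lra.
have u_ge0 : 0 <= u by lra.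
have p_ge0 : 0 <= p by lra.
rewrite -ler_sqr ?nnegrE; last 2 first.
- by rewrite !mulr_ge0 ?invr_ge0 ?sqrtr_ge0.
- by rewrite !mulr_ge0 ?invr_ge0 ?sqrtr_ge0.
rewrite !exprMn !exprVn !sqr_sqrtr ?(ltW t_gt0) ?(ltW t1_gt0) //.
have p1_sq : p1 ^+ 2 <= 16 / 9 * p ^+ 2.
  have -> : 16 / 9 * p ^+ 2 = (4 / 3 * p) ^+ 2 by field.
  by rewrite ler_sqr ?nnegrE //; lra.
have t1_inv : t1^-1 <= 3 / 2 * t^-1.
  have -> : 3 / 2 * t^-1 = (2 / 3 * t)^-1 by field; rewrite gt_eqF.
  by rewrite lef_pV2 ?posrE //; lra.
have : p1 ^+ 2 * u1 / t1 <= 16 / 9 * p ^+ 2 * (2 * u) * (3 / 2 / t).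
  apply: ler_pM; rewrite ?mulr_ge0 ?exprn_ge0 ?invr_ge0 ?(ltW t1_gt0) //.
  by apply: ler_pM; rewrite ?exprn_ge0.
have -> : 16 / 9 * p ^+ 2 * (2 * u) * (3 / 2 / t) = 16 / 3 * (p ^+ 2 * u / t).
  by field; rewrite gt_eqF.
have : 0 <= p ^+ 2 * u / t by rewrite !mulr_ge0 ?exprn_ge0 ?invr_ge0 ?(ltW t_gt0).
lra.
Qed.

Lemma sqrt_rate_le (a c x L' M L T : R) : 0 <= a -> a <= c ^+ 2 -> 0 <= c ->
  0 <= x <= M -> 0 <= L -> L' <= L -> 0 < T ->
  Num.sqrt (a * x * L' / T) <= c * Num.sqrt (M * L / T).
Proof.
move=> a_ge0 a_le c_ge0 /andP[x_ge0 x_le] L_ge0 L'_le T_gt0.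
apply: sqrt_le_mul => //; rewrite [_ * (_ / T)]mulrA ler_wpM2r ?invr_ge0 ?(ltW T_gt0) //.
apply: (@le_trans _ _ (a * x * L)); first by rewrite ler_wpM2l ?mulr_ge0.
by rewrite mulrA ler_wpM2r // ler_pM.
Qed.

Lemma transition_rate_le (m p M L1 L T : R) :
  0 <= m / p <= M -> 0 <= L -> L1 <= L -> 0 < T ->
  Num.sqrt (150 * m / (T * p) * L1) <= 13 * Num.sqrt (M * L / T).
Proof.
move=> mp_bnd L_ge0 L1_le T_gt0.
rewrite (_ : 150 * m / (T * p) * L1 = 150 * (m / p) * L1 / T); last first.
  by rewrite invfM; ring.
by apply: sqrt_rate_le => //; rewrite expr2; lra.
Qed.

Lemma reward_rate_le (lam M L2 L T Phi : R) :
  0 <= lam <= M -> 0 <= L -> L2 <= 2 * L -> 0 < T -> Phi <= 3 * Num.sqrt lam ->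
  3 * Num.sqrt (27 * L2 / T) * Phi <= 72 * Num.sqrt (M * L / T).
Proof.
move=> /andP[lam_ge0 lam_le] L_ge0 L2_le T_gt0 Phi_le.
apply: (@le_trans _ _ (9 * (Num.sqrt lam * Num.sqrt (27 * L2 / T)))).
  rewrite (_ : 9 * _ = 3 * Num.sqrt (27 * L2 / T) * (3 * Num.sqrt lam)); last by ring.
  by rewrite ler_wpM2l ?mulr_ge0 ?sqrtr_ge0 ?ler0n.
rewrite -sqrtrM // (_ : lam * (27 * L2 / T) = 54 * lam * (L2 / 2) / T); last first.
  by field; rewrite gt_eqF.
have : Num.sqrt (54 * lam * (L2 / 2) / T) <= 8 * Num.sqrt (M * L / T).
  by apply: sqrt_rate_le; rewrite ?lam_ge0 ?lam_le ?expr2 //; lra.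
lra.
Qed.

End SqrtBounds.

Section LogBounds.
Variables (R : realType) (N T : R).

Lemma NT_ge3 : 3 <= N -> 1 <= T -> 3 <= N * T.
Proof. by move=> N_ge3 T_ge1; rewrite -[3]mulr1 ler_pM //; lra. Qed.

Lemma ln_NT_ge0 : 3 <= N -> 1 <= T -> 0 <= ln (N * T).
Proof. by move=> N_ge3 T_ge1; rewrite ln_ge0 //; have := NT_ge3 N_ge3 T_ge1; lra. Qed.

Lemma ln_2TN_le : 3 <= N -> 1 <= T -> ln (2 * T * N) <= 2 * ln (N * T).
Proof.
move=> N_ge3 T_ge1; have NT_ge3 := NT_ge3 N_ge3 T_ge1.
rewrite (_ : 2 * T * N = 2 * (N * T)); last by ring.
rewrite lnM ?posrE; [|lra|lra].
suff : ln 2 <= ln (N * T) by lra.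
by rewrite ler_ln ?posrE; lra.
Qed.

Lemma ln_3T_div_le (k : nat) : 3 <= N -> 1 <= T -> ln (3 * T / k%:R) <= ln (N * T).
Proof.
move=> N_ge3 T_ge1; have [->|k_gt0] := posnP k.
  by rewrite invr0 mulr0 (le_trans (ln_le0 _)) ?ln_NT_ge0.
have k_ge1 : 1 <= k%:R :> R by rewrite ler1n.
have NT_ge3 := NT_ge3 N_ge3 T_ge1.
rewrite ler_ln ?posrE ?divr_gt0 ?ler_pdivrMr; try lra.
apply: (le_trans (ler_wpM2r _ N_ge3)); first lra.
by rewrite ler_peMr //; lra.
Qed.

End LogBounds.

Section Model.
Variable R : realType.

Lemma prob_under_ge0 n (q : 'I_n -> R) a x :
  (forall j, 0 <= q j <= 1) -> 0 <= prob_under q a x.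
Proof.
move=> q01; apply: prodr_ge0 => j _; have /andP[q_ge0 q_le1] := q01 j.
have q'_ge0 : 0 <= 1 - q j by rewrite subr_ge0.
case: a => [[l v]|]; last by case: (x j).
by case: (l == j); [case: (x j == v) | case: (x j)].
Qed.

Lemma trans_ge0 n k (q0 : 'I_n -> R) (K : assignment n -> 'I_k -> R) a i :
  (forall j, 0 <= q0 j <= 1) -> (forall x i, 0 <= K x i) -> 0 <= trans q0 K a i.
Proof.
move=> q01 K_ge0; apply: sumr_ge0 => x _.
by rewrite mulr_ge0 ?prob_under_ge0.
Qed.

Lemma interv0_eq (a b : interv 0) : a = b.
Proof. by case: a => [[[]]|]; case: b => [[[]]|]. Qed.

End Model.

Section TransitionEstimates.
Variables (R : realType) (n k : nat).
Implicit Types (P Ph : interv n -> 'I_k -> R) (f : interv n -> R) (m : 'I_k -> nat).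

Lemma pplus_ge0 P : 0 <= pplus P.
Proof. by apply: le_bigmin => // ai; apply: ltW. Qed.

Lemma pplus_le P a i : 0 < P a i -> pplus P <= P a i.
Proof.
by move=> P_gt0; apply: (@bigmin_le_cond _ _ _ 1 (a, i) (fun ai => 0 < P ai.1 ai.2)).
Qed.

Lemma dist_le_l1dist Ph P a i : `|Ph a i - P a i| <= l1dist Ph P a.
Proof. by rewrite /l1dist (bigD1 i) //= lerDl sumr_ge0. Qed.

Definition mult_close Ph P := forall a i, 2 / 3 * P a i <= Ph a i <= 4 / 3 * P a i.

Lemma l1dist_pplus_mult_close Ph P :
  (forall a i, 0 <= P a i) -> (forall a i, 0 <= Ph a i) ->
  (forall a i, 0 < Ph a i -> 0 < P a i) ->
  (forall a, l1dist Ph P a <= pplus P / 3) -> mult_close Ph P.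
Proof.
move=> P_ge0 Ph_ge0 Ph_supp l1_le a i.
have [P_gt0|P_le0] := ltP 0 (P a i).
  have := le_trans (dist_le_l1dist Ph P a i) (l1_le a).
  have := pplus_le P_gt0; rewrite ler_norml => pp_le /andP[lo hi].
  apply/andP; split; lra.
have P0 : P a i = 0 by apply/le_anti; rewrite P_le0 P_ge0.
have Ph0 : Ph a i = 0.
  by apply/le_anti; rewrite Ph_ge0 andbT leNgt; apply/negP => /Ph_supp; rewrite P0 ltxx.
by rewrite P0 Ph0 !mulr0 lexx.
Qed.

Lemma ler_Ptf_scale (c : R) Ph P f i : (forall a, 0 <= f a) ->
  (forall a, c * P a i <= Ph a i) -> c * Ptf P f i <= Ptf Ph f i.
Proof.
move=> f_ge0 le_P; rewrite /Ptf mulr_sumr; apply: ler_sum => a _.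
by rewrite mulrA ler_wpM2r.
Qed.

Lemma Phi_ge0 P m f : 0 <= Phi P m f.
Proof. by apply: (big_ind (fun x => 0 <= x)) => // x y; rewrite le_max => ->. Qed.

Lemma row_le_Phi P m f a :
  \sum_(i < k) P a i * Num.sqrt (m i)%:R / Num.sqrt (Ptf P f i) <= Phi P m f.
Proof.
apply: le_trans (ler_norm _) _.
exact: (le_bigmax _ (fun a => `|\sum_(i < k) P a i * Num.sqrt (m i)%:R / Num.sqrt (Ptf P f i)|)).
Qed.

Lemma lambda_ge0 P m : 0 <= lambda P m.
Proof.
rewrite /lambda; set E := (X in inf X).
have [[y Ey]|E0] := pselect (exists y, E y); last first.
  by rewrite (_ : E = set0) ?inf0 // -subset0 => y Ey; apply: E0; exists y.
by apply: lb_le_inf; [exists y | move=> _ [f [_ [_ ->]]]; rewrite exprn_ge0 ?Phi_ge0].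
Qed.

End TransitionEstimates.

Section CloseTransitions.
Variables (R : realType) (n k : nat) (P Ph : interv n -> 'I_k -> R) (m mh : 'I_k -> nat).
Hypotheses (P_ge0 : forall a i, 0 <= P a i) (Ph_ge0 : forall a i, 0 <= Ph a i).
Hypotheses (Ph_supp : forall a i, 0 < Ph a i -> 0 < P a i) (Ph_close : mult_close Ph P).
Hypothesis mh_le : forall i, (mh i)%:R <= 2 * (m i)%:R :> R.

Lemma Ptf_close_ge f i : (forall a, 0 <= f a) -> 2 / 3 * Ptf P f i <= Ptf Ph f i.
Proof. by move=> f_ge0; apply: ler_Ptf_scale => // a; case/andP: (Ph_close a i). Qed.

Lemma Ptf_close_le f i : (forall a, 0 <= f a) -> 3 / 4 * Ptf Ph f i <= Ptf P f i.
Proof.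
move=> f_ge0; apply: ler_Ptf_scale => // a.
by case/andP: (Ph_close a i) => _ Ph_le; lra.
Qed.

Lemma admissible_close f : (forall a, 0 <= f a) -> admissible P f -> admissible Ph f.
Proof.
move=> f_ge0 f_adm a i /Ph_supp /f_adm Ptf_gt0.
by have := Ptf_close_ge i f_ge0; lra.
Qed.

Lemma admissible_close_inv f : (forall a, 0 <= f a) -> admissible Ph f -> admissible P f.
Proof.
move=> f_ge0 f_adm a i P_gt0.
have Ph_gt0 : 0 < Ph a i by case/andP: (Ph_close a i); lra.
by have := f_adm a i Ph_gt0; have := Ptf_close_le i f_ge0; lra.
Qed.

Lemma Phi_entry_close_le f a i : (forall a, 0 <= f a) -> admissible P f ->
  Ph a i * Num.sqrt (mh i)%:R / Num.sqrt (Ptf Ph f i)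
    <= 3 * (P a i * Num.sqrt (m i)%:R / Num.sqrt (Ptf P f i)).
Proof.
move=> f_ge0 f_adm.
have [P_gt0|P_le0] := ltP 0 (P a i).
  apply: sqrt_ratio_le; [|by rewrite ler0n mh_le| exact: f_adm P_gt0 | exact: Ptf_close_ge].
  by case/andP: (Ph_close a i) => _ ->; rewrite Ph_ge0.
have -> : Ph a i = 0.
  apply/le_anti; rewrite Ph_ge0 andbT leNgt; apply/negP => /Ph_supp.
  by move/lt_le_trans/(_ P_le0); rewrite ltxx.
by rewrite !mul0r !mulr_ge0 ?invr_ge0 ?sqrtr_ge0.
Qed.

Lemma Phi_close_le f : (forall a, 0 <= f a) -> admissible P f -> Phi Ph mh f <= 3 * Phi P m f.
Proof.
move=> f_ge0 f_adm; apply/bigmax_leP; split=> [|a _]; first by rewrite mulr_ge0 ?Phi_ge0.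
rewrite ger0_norm; last by apply: sumr_ge0 => i _; rewrite !mulr_ge0 ?invr_ge0 ?sqrtr_ge0.
apply: le_trans (ler_wpM2l _ (row_le_Phi P m f a)) => //.
by rewrite mulr_sumr; apply: ler_sum => i _; apply: Phi_entry_close_le.
Qed.

Lemma Phi_opt_le_sqrt_lambda fst : freq fst -> admissible Ph fst ->
  (forall f, freq f -> admissible Ph f -> Phi Ph mh fst <= Phi Ph mh f) ->
  Phi Ph mh fst <= 3 * Num.sqrt (lambda P m).
Proof.
move=> fst_freq fst_adm fst_opt.
have Phi_sq_le : Phi Ph mh fst ^+ 2 <= 3 ^+ 2 * lambda P m.
  rewrite -ler_pdivrMl ?exprn_gt0 //; apply: lb_le_inf.
    exists (Phi P m fst ^+ 2), fst; split=> //; split=> //.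
    exact: admissible_close_inv fst_freq.1 fst_adm.
  move=> _ [f [f_freq [f_adm ->]]].
  rewrite ler_pdivrMl ?exprn_gt0 // -exprMn ler_sqr ?nnegrE ?mulr_ge0 ?Phi_ge0 //.
  apply: le_trans (fst_opt f f_freq (admissible_close f_freq.1 f_adm)) _.
  exact: Phi_close_le f_freq.1 f_adm.
rewrite -(ger0_norm (Phi_ge0 Ph mh fst)) -sqrtr_sqr.
by apply: sqrt_le_mul.
Qed.

End CloseTransitions.

Section PluginValue.
Variables (R : realType) (n k : nat) (P Ph : interv n -> 'I_k -> R).
Variables (ER Rh : 'I_k -> interv n -> R) (mh : 'I_k -> nat) (fst : interv n -> R) (T L : R).
Hypotheses (P_ge0 : forall a i, 0 <= P a i) (Ph_ge0 : forall a i, 0 <= Ph a i).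
Hypotheses (Ph_close : mult_close Ph P) (Rh01 : forall i b, 0 <= Rh i b <= 1).
Hypotheses (fst_adm : admissible Ph fst) (T_gt0 : 0 < T) (L_ge0 : 0 <= L).
Hypothesis reward_err : forall i b, 0 < Ptf Ph fst i ->
  `|ER i b - Rh i b| <= Num.sqrt (27 * (mh i)%:R / (T * Ptf Ph fst i) * L).

Lemma weighted_reward_err_le a i b :
  Ph a i * `|ER i b - Rh i b|
    <= Num.sqrt (27 * L / T) * (Ph a i * Num.sqrt (mh i)%:R / Num.sqrt (Ptf Ph fst i)).
Proof.
have [Ph_gt0|Ph_le0] := ltP 0 (Ph a i); last first.
  have -> : Ph a i = 0 by apply/le_anti; rewrite Ph_le0 Ph_ge0.
  by rewrite !mul0r mulr0.
have Ptf_gt0 := fst_adm Ph_gt0.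
have c_ge0 : 0 <= 27 * L / T by rewrite divr_ge0 ?mulr_ge0 // ltW.
have := reward_err b Ptf_gt0.
rewrite (_ : 27 * (mh i)%:R / (T * Ptf Ph fst i) * L
           = 27 * L / T * ((mh i)%:R / Ptf Ph fst i)); last by field; rewrite !gt_eqF.
rewrite (sqrtrM _ c_ge0) (sqrtrM _ (ler0n _ _)) (sqrtrV (ltW Ptf_gt0)) => err.
rewrite (_ : Num.sqrt _ * _ = Ph a i * (Num.sqrt (27 * L / T)
           * (Num.sqrt (mh i)%:R / Num.sqrt (Ptf Ph fst i)))); last by ring.
by rewrite ler_wpM2l // ltW.
Qed.

Lemma value_entry_err_le a i b :
  `|P a i * ER i b - Ph a i * Rh i b|
    <= 3 / 2 * (Ph a i * `|ER i b - Rh i b|) + `|Ph a i - P a i|.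
Proof.
rewrite (_ : P a i * ER i b - Ph a i * Rh i b
           = P a i * (ER i b - Rh i b) + (P a i - Ph a i) * Rh i b); last by ring.
apply: le_trans (ler_normD _ _) _; apply: lerD.
  rewrite normrM (ger0_norm (P_ge0 a i)) mulrA ler_wpM2r //.
  by case/andP: (Ph_close a i); lra.
have /andP[Rh_ge0 Rh_le1] := Rh01 i b.
by rewrite normrM distrC (ger0_norm Rh_ge0) ler_piMr.
Qed.

Lemma value_plugin_err a pi :
  `|value P ER a pi - value Ph Rh a pi|
    <= 3 / 2 * Num.sqrt (27 * L / T) * Phi Ph mh fst + l1dist Ph P a.
Proof.
rewrite /value -sumrB; apply: le_trans (ler_norm_sum _ _ _) _.
apply: le_trans (ler_sum _ (fun i _ => value_entry_err_le a i (pi i))) _.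
rewrite big_split /= lerD2r -mulr_sumr -mulrA ler_wpM2l ?divr_ge0 //.
apply: le_trans (ler_sum _ (fun i _ => weighted_reward_err_le a i (pi i))) _.
by rewrite -mulr_sumr ler_wpM2l ?sqrtr_ge0 ?row_le_Phi.
Qed.

Lemma regret_le_plugin_err a pi b rho :
  value Ph Rh a pi <= value Ph Rh b rho ->
  value P ER a pi - value P ER b rho
    <= 3 * Num.sqrt (27 * L / T) * Phi Ph mh fst + (l1dist Ph P a + l1dist Ph P b).
Proof.
move=> plugin_le; have := value_plugin_err a pi; have := value_plugin_err b rho.
have := ler_norm (value P ER a pi - value Ph Rh a pi).
have := ler_norm (- (value P ER b rho - value Ph Rh b rho)); rewrite normrN.
lra.
Qed.

End PluginValue.

Lemma value_le_greedy (R : realType) n k (Ph : interv n -> 'I_k -> R)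
    (Rh : 'I_k -> interv n -> R) (pih0 : interv n) (pih : 'I_k -> interv n) a pi :
  (forall a i, 0 <= Ph a i) -> (forall i b, Rh i b <= Rh i (pih i)) ->
  (forall a, \sum_(i < k) Ph a i * Rh i (pih i) <= \sum_(i < k) Ph pih0 i * Rh i (pih i)) ->
  value Ph Rh a pi <= value Ph Rh pih0 pih.
Proof.
move=> Ph_ge0 pih_greedy pih0_greedy; apply: le_trans (pih0_greedy a).
by apply: ler_sum => i _; rewrite ler_wpM2l.
Qed.


Theorem corollary2 (R : realType) :
  exists C : R, 0 < C /\
  forall (n k T : nat)
    (* the causal MDP instance *)
    (q0 : 'I_n -> R) (q : 'I_k -> 'I_n -> R)
    (K : assignment n -> 'I_k -> R) (r : 'I_k -> assignment n -> R),
    (forall j, 0 <= q0 j <= 1) ->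
    (forall i j, 0 <= q i j <= 1) ->
    (forall x i, 0 <= K x i) ->
    (forall x, \sum_(i < k) K x i = 1) ->
    (forall i x, 0 <= r i x <= 1) ->
    let P := trans q0 K in
    let ER := fun i => exp_reward (q i) (r i) in
    let m0 := mpar q0 in
    let m := fun i => mpar (q i) in
    let pp := pplus P in
    let N : R := (Nint n)%:R in
    let Tr : R := T%:R in
    (* an optimal policy *)
    forall (pistar0 : interv n) (pistar : 'I_k -> interv n),
    (forall (a : interv n) (pi : 'I_k -> interv n),
        value P ER a pi <= value P ER pistar0 pistar) ->
    (0 < T)%N ->
    (* the realised estimates of ALG-CE *)
    forall (P1 P3 P5 : interv n -> 'I_k -> R)
      (qh0 : 'I_n -> R) (qh3 qh5 : 'I_k -> 'I_n -> R)
      (ftil fst : interv n -> R) (Rh : 'I_k -> interv n -> R)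
      (pih0 : interv n) (pih : 'I_k -> interv n),
    (* estimates are empirical frequencies / means *)
    (forall a i, 0 <= P1 a i <= 1) ->
    (forall a i, 0 <= P3 a i <= 1) ->
    (forall a i, 0 <= P5 a i <= 1) ->
    (* an empirical transition frequency can only be positive if the
       transition has positive probability *)
    (forall a i, 0 < P1 a i -> 0 < P a i) ->
    (forall a i, 0 < P3 a i -> 0 < P a i) ->
    (forall a i, 0 < P5 a i -> 0 < P a i) ->
    (forall j, 0 <= qh0 j <= 1) ->
    (forall i j, 0 <= qh3 i j <= 1) ->
    (forall i j, 0 <= qh5 i j <= 1) ->
    (forall i b, 0 <= Rh i b <= 1) ->
    let mh0 := mpar qh0 in
    let mh3 := fun i => mpar (qh3 i) in
    let mh5 := fun i => mpar (qh5 i) in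
    (* Phase 2 *)
    freq ftil ->
    (forall f : interv n -> R, freq f -> minPtf P1 f <= minPtf P1 ftil) ->
    (* Phase 4 *)
    freq fst -> admissible P1 fst ->
    (forall f : interv n -> R, freq f -> admissible P1 f -> Phi P1 mh3 fst <= Phi P1 mh3 f) ->
    (* output policy *)
    (forall i b, Rh i b <= Rh i (pih i)) ->
    (forall a, \sum_(i < k) P1 a i * Rh i (pih i)
               <= \sum_(i < k) P1 pih0 i * Rh i (pih i)) ->
    (* good event E1 *)
    (forall a, [/\ l1dist P1 P a <= pp / 3, l1dist P3 P a <= pp / 3
                 & l1dist P5 P a <= pp / 3]) ->
    (* E2 *)
    (2 / 3 * (m0%:R : R) <= (mh0%:R : R) <= 2 * (m0%:R : R)) ->
    (* E3 *)
    (forall i, (2 / 3 * ((m i)%:R : R) <= ((mh3 i)%:R : R) <= 2 * ((m i)%:R : R)) /\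
               (2 / 3 * ((m i)%:R : R) <= ((mh5 i)%:R : R) <= 2 * ((m i)%:R : R))) ->
    (* E4 *)
    (forall a, l1dist P1 P a
               <= Num.sqrt (150 * m0%:R / (Tr * pp) * ln (3 * Tr / k%:R))) ->
    (* E5; eta_hat_i = +oo (no constraint) when (Phat^T fhat_star)_i = 0 *)
    (forall i a, 0 < Ptf P1 fst i ->
       `| ER i a - Rh i a |
         <= Num.sqrt (27 * (mh3 i)%:R / (Tr * Ptf P1 fst i) * ln (2 * Tr * N))) ->
    (* conclusion: eps(pihat) = O(sqrt(max{lambda, m0/p+} log(NT)/T)) *)
    value P ER pistar0 pistar - value P ER pih0 pih
      <= C * Num.sqrt (Num.max (lambda P m) (m0%:R / pp) * ln (N * Tr) / Tr).
Proof.
exists 98; split=> [|n k T q0 q K r q0_01 _ K_ge0 _ _ P ER m0 m pp N Tr pistar0 pistar _ T_gt0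
  P1 P3 P5 qh0 qh3 qh5 _ fst Rh pih0 pih P1_01 _ _ P1_supp _ _ _ _ _ Rh01 mh0 mh3 mh5
  _ _ fst_freq fst_adm fst_opt pih_greedy pih0_greedy E1 _ E3 E4 E5]; first lra.
(* For n = 0 there is a single intervention, so the regret vanishes; this case is apart
   because then N = 1 and ln (N * T) may be 0. *)
have [n0|n_gt0] := posnP n.
  subst n; rewrite (interv0_eq pih0 pistar0) (_ : pih = pistar); last first.
    by apply/funext => i; apply: interv0_eq.
  by rewrite subrr mulr_ge0 ?sqrtr_ge0.
have P_ge0 a i : 0 <= P a i by apply: trans_ge0.
have P1_ge0 a i : 0 <= P1 a i by case/andP: (P1_01 a i).
have P1_close : mult_close P1 P.
  by apply: l1dist_pplus_mult_close => // a; case: (E1 a).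
have Tr_ge1 : 1 <= Tr by rewrite ler1n.
have Tr_gt0 : 0 < Tr by lra.
have N_ge3 : 3 <= N by rewrite ler_nat /Nint; lia.
have L_ge0 := ln_NT_ge0 N_ge3 Tr_ge1.
set M := Num.max _ _; set S := Num.sqrt (M * _ / Tr).
have lambda_le : 0 <= lambda P m <= M by rewrite lambda_ge0 le_max lexx.
have m0pp_le : 0 <= m0%:R / pp <= M by rewrite divr_ge0 ?pplus_ge0 // le_max lexx orbT.
have trans_err a : l1dist P1 P a <= 13 * S.
  by apply: le_trans (E4 a) (transition_rate_le _ _ (ln_3T_div_le _ N_ge3 Tr_ge1) _).
have mh3_le i : (mh3 i)%:R <= 2 * (m i)%:R :> R by case: (E3 i) => /andP[].
have reward_err : 3 * Num.sqrt (27 * ln (2 * Tr * N) / Tr) * Phi P1 mh3 fst <= 72 * S.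
  apply: (reward_rate_le lambda_le L_ge0 (ln_2TN_le N_ge3 Tr_ge1) Tr_gt0).
  exact: (Phi_opt_le_sqrt_lambda P_ge0 P1_ge0 P1_supp P1_close mh3_le).
have L2_ge0 : 0 <= ln (2 * Tr * N) by rewrite ln_ge0 //; nra.
have := regret_le_plugin_err P_ge0 P1_ge0 P1_close Rh01 fst_adm Tr_gt0 L2_ge0 E5
  (value_le_greedy pistar0 pistar P1_ge0 pih_greedy pih0_greedy).
have := trans_err pistar0; have := trans_err pih0.
lra.
Qed.
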